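(* Let $V$ be an Archimedean linear lattice and let $(\mathcal{R}, S, V)$ be a $V$-complete vector $S$-metric space. Let $p, k:\mathcal{R}\to\mathcal{R}$ be maps satisfying: (i) for all $\xi,\gamma\in\mathcal{R}$, $$S(p\xi,p\xi,p\gamma)\preceq h_1 S(k\xi,k\xi,k\gamma)+h_2 S(p\xi,p\xi,k\xi)+h_3 S(p\gamma,p\gamma,k\gamma)+h_4 S(p\xi,p\xi,k\gamma)+h_5 S(p\gamma,p\gamma,k\xi),$$ where $h_1,\dots,h_5$ are positive real constants with $2h_1+2h_2+2h_3+4h_4+4h_5<1$; (ii) $p(\mathcal{R})\subset k(\mathcal{R})$; (iii) one of $p(\mathcal{R})$ or $k(\mathcal{R})$ is a $V$-complete subspace of $\mathcal{R}$. Then $\{p,k\}$ has a unique point of coincidence in $\mathcal{R}$. If moreover $\{p,k\}$ is weakly compatible, then $p$ and $k$ have a unique common fixed point in $\mathcal{R}$.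
   Context: An ordered linear space is a real vector space $V$ with a partial order $\preceq$ such that $x\preceq y$ implies $x+z\preceq y+z$ and $\omega x\preceq \omega y$ for all $z\in V$, $\omega>0$. A linear lattice (Riesz space) is an ordered linear space in which every two-element set has a supremum and an infimum. Write $V^+=\{x\in V: x\succeq 0\}$; for a sequence $\langle\mu_n\rangle$ in $V$, $\mu_n\downarrow 0$ means $\mu_n$ is decreasing with infimum $0$. $V$ is Archimedean if $\frac1n x\downarrow 0$ for every $x\in V^+$. A vector $S$-metric on a nonempty set $\mathcal{R}$ is a map $S:\mathcal{R}\times\mathcal{R}\times\mathcal{R}\to V$ such that for all $x,y,z,a\in\mathcal{R}$: (a) $S(x,y,z)\succeq 0$; (b) $S(x,y,z)=0$ iff $x=y=z$; (c) $S(x,y,z)\preceq S(x,x,a)+S(y,y,a)+S(z,z,a)$. Then $(\mathcal{R},S,V)$ is a vector $S$-metric space. A sequence $\langle x_n\rangle$ in $\mathcal{R}$ $V$-converges to $x\in\mathcal{R}$ if there is a sequence $\mu_n\downarrow 0$ in $V$ with $S(x_n,x_n,x)\preceq \mu_n$ for all $n$; it is $V$-Cauchy if there is $\mu_n\downarrow0$ in $V$ with $S(x_n,x_n,x_{n+q})\preceq\mu_n$ for all $n,q$. The space (or a subset) is $V$-complete if every $V$-Cauchy sequence in it $V$-converges to a limit in it. For maps $f,g:\mathcal{R}\to\mathcal{R}$, a point $x$ with $fx=gx=y$ is a coincidence point and $y$ is a point of coincidence of $f$ and $g$; $f,g$ are weakly compatible if $fgx=gfx$ whenever $fx=gx$.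 A common fixed point of $f$ and $g$ is a point $x$ with $fx=gx=x$. *)

From HB Require Import structures.
From mathcomp Require Import all_boot all_order all_algebra.
From mathcomp Require Import reals.
Set Implicit Arguments. Unset Strict Implicit. Unset Printing Implicit Defensive.
Import Order.TTheory GRing.Theory Num.Theory.
Local Open Scope ring_scope.

Section OrderedSpaces.
Variables (R : realType) (V : lmodType R).
Variable le : V -> V -> Prop.

Definition ordered_linear_space : Prop :=
  [/\ (forall x, le x x),
      (forall x y, le x y -> le y x -> x = y),
      (forall x y z, le x y -> le y z -> le x z),
      (forall x y z, le x y -> le (x + z) (y + z)) &
      (forall (w : R) x y, 0 < w -> le x y -> le (w *: x) (w *: y))].

Definition is_sup2 (x y s : V) : Prop :=
  le x s /\ le y s /\ forall u, le x u -> le y u -> le s u.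
Definition is_inf2 (x y i : V) : Prop :=
  le i x /\ le i y /\ forall u, le u x -> le u y -> le u i.

Definition linear_lattice : Prop :=
  ordered_linear_space /\
  forall x y, (exists s, is_sup2 x y s) /\ (exists i, is_inf2 x y i).

Definition decr_to_0 (mu : nat -> V) : Prop :=
  (forall n, le (mu n.+1) (mu n)) /\
  (forall n, le 0 (mu n)) /\
  (forall b, (forall n, le b (mu n)) -> le b 0).

Definition archimedean : Prop :=
  forall x, le 0 x -> decr_to_0 (fun n => (n.+1%:R)^-1 *: x).

Variable X : Type.
Variable S : X -> X -> X -> V.

Definition vector_S_metric : Prop :=
  (forall x y z, le 0 (S x y z)) /\
  (forall x y z, S x y z = 0 <-> (x = y /\ y = z)) /\
  (forall x y z a, le (S x y z) (S x x a + S y y a + S z z a)).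

Definition V_converges (u : nat -> X) (x : X) : Prop :=
  exists mu, decr_to_0 mu /\ forall n, le (S (u n) (u n) x) (mu n).

Definition V_Cauchy (u : nat -> X) : Prop :=
  exists mu, decr_to_0 mu /\ forall n q, le (S (u n) (u n) (u (n + q)%N)) (mu n).

Definition V_complete_set (A : X -> Prop) : Prop :=
  forall u, (forall n, A (u n)) -> V_Cauchy u ->
  exists2 x, A x & V_converges u x.

Definition V_complete : Prop := V_complete_set (fun _ => True).
End OrderedSpaces.

Definition fimage {X : Type} (f : X -> X) : X -> Prop := fun y => exists x, f x = y.

Definition point_of_coincidence {X : Type} (f g : X -> X) (y : X) : Prop :=
  exists x, f x = y /\ g x = y.

Definition weakly_compatible {X : Type} (f g : X -> X) : Prop :=
  forall x, f x = g x -> f (g x) = g (f x).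

(* Jungck iteration: since p(X) is contained in k(X) we may choose x with
   k (x (n+1)) = p (x n).  The contractive condition gives d (n+1) <= lam d n for
   d n = S(p x_n, p x_n, p x_(n+1)) and lam = (h1 + h2 + h5) / (1 - h3 - 2 h5) < 1;
   with the triangle inequality S(a,a,c) <= 2 S(a,a,b) + S(c,c,b) this bounds
   S(p x_n, p x_n, p x_(n+q)) by 2 lam^n d 0 / (1 - lam), which decreases to 0
   because V is Archimedean.  Hence p x_n is V-Cauchy and converges to some z = k u.
   The contractive condition at u and x_(n+1) then yields
   S(pu,pu,z) <= (2 h2 + 4 h4) S(pu,pu,z) + (terms decreasing to 0), and as
   2 h2 + 4 h4 < 1 this forces p u = z = k u.  For two coincidence values
   E = S(pu,pu,pv) <= (h1 + h4 + h5) E gives E = 0; under weak compatibility p u is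
   again a coincidence point with value p (p u), so p u is the unique common
   fixed point. *)

From mathcomp Require Import all_boot all_order all_algebra.
From mathcomp Require Import reals ring lra.
From Stdlib Require Import ClassicalEpsilon.
Import Order.TTheory GRing.Theory Num.Theory.
Local Open Scope ring_scope.
Set Implicit Arguments. Unset Strict Implicit.

Section Geometric.
Variable R : realType.

Lemma bernoulli_ineq (t : R) n : 0 <= t -> 1 + n%:R * t <= (1 + t) ^+ n.
Proof.
move=> t0; elim: n => [|n IH]; first by rewrite expr0 mul0r addr0.
have IH' : (1 + t) * (1 + n%:R * t) <= (1 + t) ^+ n.+1.
  by rewrite exprS ler_wpM2l //; lra.
apply: le_trans IH'; rewrite -natr1; have : 0 <= n%:R :> R by []; nra.
Qed.

Lemma exists_exprn_le (l e : R) : 0 < l -> l < 1 -> 0 < e -> exists n, l ^+ n <= e.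
Proof.
move=> l0 l1 e0; pose t := l^-1 - 1.
have t0 : 0 < t by rewrite subr_gt0 invf_gt1.
have lE : l = (1 + t)^-1 by rewrite /t addrC subrK invrK.
have te0 : 0 <= (t * e)^-1 by rewrite invr_ge0 ltW // mulr_gt0.
exists (Num.bound (t * e)^-1); set n := Num.bound _.
have nte : 1 < n%:R * (t * e).
  by rewrite -ltr_pdivrMr ?mulr_gt0 // div1r archi_boundP.
have tn : 0 < (1 + t) ^+ n by rewrite exprn_gt0 //; lra.
have := bernoulli_ineq n (ltW t0); have : 0 <= n%:R :> R by [].
rewrite lE exprVn -div1r ler_pdivrMr // => ??; nra.
Qed.

End Geometric.

Section OrderedLinearSpace.
Variables (R : realType) (V : lmodType R) (le : V -> V -> Prop).
Hypothesis ols : ordered_linear_space le.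
Local Notation "x ⪯ y" := (le x y) (at level 70, no associativity).

Lemma vle_refl x : x ⪯ x.
Proof. by case: ols. Qed.

Lemma vle_anti x y : x ⪯ y -> y ⪯ x -> x = y.
Proof. by case: ols => _ anti _ _ _; apply: anti. Qed.

Lemma vle_trans y x z : x ⪯ y -> y ⪯ z -> x ⪯ z.
Proof. by case: ols => _ _ trans _ _; apply: trans. Qed.

Lemma vleDr z x y : x ⪯ y -> x + z ⪯ y + z.
Proof. by case: ols => _ _ _ addr _; apply: addr. Qed.

Lemma vleD x y z w : x ⪯ y -> z ⪯ w -> x + z ⪯ y + w.
Proof.
move=> xy zw; apply: vle_trans (vleDr z xy) _.
by rewrite ![y + _]addrC; apply: vleDr.
Qed.

Lemma vleBDr x y z : x ⪯ y + z -> x - z ⪯ y.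
Proof. by move/(vleDr (- z)); rewrite addrK. Qed.

Lemma vle_wpZ2l (r : R) x y : 0 <= r -> x ⪯ y -> r *: x ⪯ r *: y.
Proof.
rewrite le_eqVlt => /predU1P[<- _|r0 xy]; first by rewrite !scale0r; apply: vle_refl.
by case: ols => _ _ _ _ scale; apply: scale.
Qed.

Lemma scaler_vge0 (r : R) x : 0 <= r -> 0 ⪯ x -> 0 ⪯ r *: x.
Proof. by move=> r0 /(vle_wpZ2l r0); rewrite scaler0. Qed.

Lemma vle_wpZ2r (r s : R) x : 0 ⪯ x -> r <= s -> r *: x ⪯ s *: x.
Proof.
move=> x0 rs; have sr0 : 0 <= s - r by rewrite subr_ge0.
have := vleDr (r *: x) (scaler_vge0 sr0 x0).
by rewrite add0r -scalerDl subrK.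
Qed.

Lemma vle_absorb (a : R) x y : a < 1 -> x ⪯ a *: x + y -> x ⪯ (1 - a)^-1 *: y.
Proof.
move=> a1 xle; have a1' : 0 < 1 - a by rewrite subr_gt0.
have : (1 - a) *: x ⪯ y.
  by rewrite scalerBl scale1r; apply: vleBDr; rewrite addrC.
have ia0 : 0 <= (1 - a)^-1 by rewrite invr_ge0 ltW.
move/(vle_wpZ2l ia0).
by rewrite scalerA mulVf ?gt_eqF // scale1r.
Qed.

Lemma decr_to_0_antitone mu m n : decr_to_0 le mu -> (m <= n)%N -> mu n ⪯ mu m.
Proof.
move=> [mu_succ _] /subnKC <-; elim: (n - m)%N => [|i IH].
  by rewrite addn0; apply: vle_refl.
by rewrite addnS; apply: vle_trans (mu_succ _) IH.
Qed.

Lemma decr_to_0Z (c : R) mu : 0 < c -> decr_to_0 le mu ->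
  decr_to_0 le (fun n => c *: mu n).
Proof.
move=> c0 [mu_succ [mu_ge0 mu_inf]]; have c0' := ltW c0.
split=> [n|]; first exact: vle_wpZ2l.
split=> [n|b b_le]; first exact: scaler_vge0.
have ic0 : 0 <= c^-1 by rewrite invr_ge0.
have : c^-1 *: b ⪯ 0.
  apply: mu_inf => n; have := vle_wpZ2l ic0 (b_le n).
  by rewrite scalerA mulVf ?gt_eqF // scale1r.
by move/(vle_wpZ2l c0'); rewrite scalerA divff ?gt_eqF // scale1r scaler0.
Qed.

Lemma decr_to_0D mu nu : decr_to_0 le mu -> decr_to_0 le nu ->
  decr_to_0 le (fun n => mu n + nu n).
Proof.
move=> dmu dnu; have [mu_succ [mu_ge0 mu_inf]] := dmu.
have [nu_succ [nu_ge0 nu_inf]] := dnu.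
split=> [n|]; first exact: vleD.
split=> [n|b b_le]; first by rewrite -[0]addr0; apply: vleD.
apply: nu_inf => m.
suff : b - nu m ⪯ 0 by move/(vleDr (nu m)); rewrite subrK add0r.
apply: mu_inf => n.
(* both sequences decrease, so it suffices to bound at the index [maxn n m] *)
apply: vle_trans (decr_to_0_antitone dmu (leq_maxl n m)); apply: vleBDr.
apply: vle_trans (b_le _) _; apply: vleD; first exact: vle_refl.
exact: decr_to_0_antitone dnu (leq_maxr n m).
Qed.

Lemma decr_to_0_geometric (c l : R) x : archimedean le -> 0 ⪯ x ->
  0 < c -> 0 < l -> l < 1 -> decr_to_0 le (fun n => (c * l ^+ n) *: x).
Proof.
move=> arch x0 c0 l0 l1; have cl0 n : 0 <= c * l ^+ n.
  by rewrite mulr_ge0 ?exprn_ge0 ?ltW.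
split=> [n|]; first by apply: vle_wpZ2r; rewrite // exprS mulrCA ler_piMl // ltW.
split=> [n|b b_le]; first exact: scaler_vge0.
have [_ [_ inf]] := arch x x0; apply: inf => m.
have m0 : 0 < m.+1%:R^-1 :> R by rewrite invr_gt0.
have [n ln] := exists_exprn_le l0 l1 (divr_gt0 m0 c0).
apply: vle_trans (b_le n) _; apply: vle_wpZ2r => //.
by rewrite -ler_pdivlMl // mulrC.
Qed.

(* Linear combinations of three fixed vectors: identities between them reduce
   to ring identities between the coefficients. *)
Definition comb3 (x y z : V) (a b c : R) : V := a *: x + b *: y + c *: z.

Lemma comb3D x y z a b c a' b' c' :
  comb3 x y z a b c + comb3 x y z a' b' c' = comb3 x y z (a + a') (b + b') (c + c').
Proof.
by rewrite /comb3 !scalerDl addrACA (addrACA (a *: x)).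
Qed.

Lemma comb3Z x y z r a b c : r *: comb3 x y z a b c = comb3 x y z (r * a) (r * b) (r * c).
Proof. by rewrite /comb3 !scalerDr !scalerA. Qed.

Lemma comb3_100 x y z : comb3 x y z 1 0 0 = x.
Proof. by rewrite /comb3 scale1r !scale0r !addr0. Qed.

Lemma comb3_010 x y z : comb3 x y z 0 1 0 = y.
Proof. by rewrite /comb3 scale1r !scale0r add0r addr0. Qed.

Lemma comb3_001 x y z : comb3 x y z 0 0 1 = z.
Proof. by rewrite /comb3 scale1r !scale0r !add0r. Qed.

Lemma comb3_000 x y z : comb3 x y z 0 0 0 = 0.
Proof. by rewrite /comb3 !scale0r !addr0. Qed.

Lemma comb3_210 x y z : comb3 x y z 2 1 0 = x + x + y.
Proof. by rewrite /comb3 scale0r addr0 scale1r scaler_nat mulr2n. Qed.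

Lemma vle_comb5 (c1 c2 c3 c4 c5 : R) (t1 t2 t3 t4 t5 u1 u2 u3 u4 u5 : V) :
  0 <= c1 -> 0 <= c2 -> 0 <= c3 -> 0 <= c4 -> 0 <= c5 ->
  t1 ⪯ u1 -> t2 ⪯ u2 -> t3 ⪯ u3 -> t4 ⪯ u4 -> t5 ⪯ u5 ->
  c1 *: t1 + c2 *: t2 + c3 *: t3 + c4 *: t4 + c5 *: t5
    ⪯ c1 *: u1 + c2 *: u2 + c3 *: u3 + c4 *: u4 + c5 *: u5.
Proof. by move=> *; repeat apply: vleD; apply: vle_wpZ2l. Qed.

Section VectorSMetric.
Variables (X : Type) (S : X -> X -> X -> V).
Hypothesis Sm : vector_S_metric le S.

Lemma S_ge0 x y z : 0 ⪯ S x y z.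
Proof. by case: Sm. Qed.

Lemma S_xxx x : S x x x = 0.
Proof. by case: Sm => _ [S0 _]; apply/S0. Qed.

Lemma S_triangle x y z : S x x z ⪯ S x x y + S x x y + S z z y.
Proof. by case: Sm => _ [_ tri]; apply: tri. Qed.

Lemma S_sym x y : S x x y = S y y x.
Proof.
suff S_le a b : S a a b ⪯ S b b a by apply: vle_anti.
by have := S_triangle a a b; rewrite S_xxx !add0r.
Qed.

Lemma S_le0_eq x y : S x x y ⪯ 0 -> x = y.
Proof.
case: Sm => _ [S0 _] /vle_anti/(_ (S_ge0 _ _ _)).
by move/S0 => [].
Qed.

Section Contraction.
Variables (p k : X -> X) (h1 h2 h3 h4 h5 : R).
Hypotheses (h1_gt0 : 0 < h1) (h2_gt0 : 0 < h2) (h3_gt0 : 0 < h3)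
  (h4_gt0 : 0 < h4) (h5_gt0 : 0 < h5).
Hypothesis h_small : 2 * h1 + 2 * h2 + 2 * h3 + 4 * h4 + 4 * h5 < 1.
Hypothesis contr : forall xi ga : X,
  S (p xi) (p xi) (p ga)
    ⪯ h1 *: S (k xi) (k xi) (k ga) + h2 *: S (p xi) (p xi) (k xi)
      + h3 *: S (p ga) (p ga) (k ga) + h4 *: S (p xi) (p xi) (k ga)
      + h5 *: S (p ga) (p ga) (k xi).

(* [lra] ignores section hypotheses, so they are passed to it explicitly. *)
Local Ltac h_lra :=
  move: (h1_gt0) (h2_gt0) (h3_gt0) (h4_gt0) (h5_gt0) (h_small); lra.

Lemma coincidence_value_unique u v : p u = k u -> p v = k v -> p u = p v.
Proof.
move=> eu ev; set E := S (p u) (p u) (p v).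
have := contr u v; rewrite -eu -ev !S_xxx (S_sym (p v)) -/E.
rewrite !scaler0 !addr0 -!scalerDl -[_ *: E]addr0 => E_le.
have a_lt1 : h1 + h4 + h5 < 1 by h_lra.
by apply: S_le0_eq; rewrite -(scaler0 _ (1 - (h1 + h4 + h5))^-1); apply: vle_absorb.
Qed.

Section JungckSequence.
Variable x : nat -> X.
Hypothesis kx : forall n, k (x n.+1) = p (x n).
Hypothesis arch : archimedean le.

Let d n := S (p (x n)) (p (x n)) (p (x n.+1)).
Let lam := (h1 + h2 + h5) / (1 - (h3 + 2 * h5)).
Let mu n := (2 / (1 - lam) * lam ^+ n) *: d 0.

Let lam_gt0 : 0 < lam.
Proof. by rewrite divr_gt0 //; h_lra. Qed.

Let lam_lt1 : lam < 1.
Proof. by rewrite ltr_pdivrMr ?mul1r; h_lra. Qed.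

Let mu_coef_gt0 : 0 < 2 / (1 - lam).
Proof. by rewrite divr_gt0 // subr_gt0. Qed.

Lemma jungck_step n : d n.+1 ⪯ lam *: d n.
Proof.
have : d n.+1 ⪯ comb3 (d n.+1) (d n) 0 (h3 + 2 * h5) (h1 + h2 + h5) 0.
  have -> : comb3 (d n.+1) (d n) 0 (h3 + 2 * h5) (h1 + h2 + h5) 0 =
      h1 *: comb3 (d n.+1) (d n) 0 0 1 0 + h2 *: comb3 (d n.+1) (d n) 0 0 1 0
      + h3 *: comb3 (d n.+1) (d n) 0 1 0 0 + h4 *: comb3 (d n.+1) (d n) 0 0 0 0
      + h5 *: comb3 (d n.+1) (d n) 0 2 1 0.
    by rewrite !comb3Z !comb3D; congr comb3; ring.
  apply: vle_trans (contr (x n.+1) (x n.+2)) _; rewrite !kx S_xxx.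
  rewrite comb3_010 comb3_100 comb3_000 comb3_210.
  apply: vle_comb5; try exact: ltW.
  - exact: vle_refl.
  - by rewrite S_sym; apply: vle_refl.
  - by rewrite S_sym; apply: vle_refl.
  - exact: vle_refl.
  - apply: vle_trans (S_triangle _ (p (x n.+1)) _) _.
    by rewrite S_sym; apply: vle_refl.
rewrite /comb3 scaler0 addr0 => d_le.
have a_lt1 : h3 + 2 * h5 < 1 by h_lra.
by have := vle_absorb a_lt1 d_le; rewrite scalerA mulrC.
Qed.

Lemma jungck_geometric n : d n ⪯ lam ^+ n *: d 0.
Proof.
elim: n => [|n IH]; first by rewrite scale1r; apply: vle_refl.
apply: vle_trans (jungck_step n) _.
by rewrite exprS -scalerA; apply: vle_wpZ2l (ltW lam_gt0) IH.
Qed.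

Lemma jungck_cauchy_bound n q : S (p (x n)) (p (x n)) (p (x (n + q)%N)) ⪯ mu n.
Proof.
have lam_neq1 : 1 - lam != 0 by rewrite subr_eq0 gt_eqF.
elim: q n => [|q IH] n.
  rewrite addn0 S_xxx; apply: scaler_vge0 (S_ge0 _ _ _).
  by rewrite mulr_ge0 ?exprn_ge0 ?ltW.
have -> : mu n = lam ^+ n *: d 0 + lam ^+ n *: d 0 + mu n.+1.
  by rewrite /mu -!scalerDl exprS; congr (_ *: _); field.
apply: vle_trans (S_triangle _ (p (x n.+1)) _) _.
rewrite (S_sym (p (x (n + q.+1)%N))) addnS -addSn.
by apply: vleD; [apply: vleD; apply: jungck_geometric | apply: IH].
Qed.

Let mu_decr : decr_to_0 le mu.
Proof.
exact: decr_to_0_geometric (S_ge0 _ _ _) mu_coef_gt0 lam_gt0 lam_lt1.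
Qed.

Lemma jungck_V_Cauchy : V_Cauchy le S (fun n => p (x n)).
Proof. by exists mu; split; last exact: jungck_cauchy_bound. Qed.

Lemma jungck_limit_coincidence u : V_converges le S (fun n => p (x n)) (k u) -> p u = k u.
Proof.
move=> [nu [nu_decr y_nu]]; set z := k u in y_nu *; set D := S (p u) (p u) z.
have nu_succ n : S (p (x n.+1)) (p (x n.+1)) z ⪯ nu n.
  exact: vle_trans (y_nu n.+1) (decr_to_0_antitone nu_decr (leqnSn n)).
have d_mu n : d n ⪯ mu n by have := jungck_cauchy_bound n 1; rewrite addn1.
have pu_near n :
    S (p u) (p u) (p (x n.+1)) ⪯ comb3 D (nu n) (mu n) (h2 + 2 * h4) (h1 + h4 + h5) h3.
  have -> : comb3 D (nu n) (mu n) (h2 + 2 * h4) (h1 + h4 + h5) h3 =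
      h1 *: comb3 D (nu n) (mu n) 0 1 0 + h2 *: comb3 D (nu n) (mu n) 1 0 0
      + h3 *: comb3 D (nu n) (mu n) 0 0 1 + h4 *: comb3 D (nu n) (mu n) 2 1 0
      + h5 *: comb3 D (nu n) (mu n) 0 1 0.
    by rewrite !comb3Z !comb3D; congr comb3; ring.
  apply: vle_trans (contr u (x n.+1)) _; rewrite kx -/z.
  rewrite comb3_010 comb3_100 comb3_001 comb3_210.
  apply: vle_comb5; try exact: ltW.
  - by rewrite S_sym; apply: y_nu.
  - exact: vle_refl.
  - by rewrite S_sym; apply: d_mu.
  - apply: vle_trans (S_triangle _ z _) _.
    by apply: vleD; [apply: vle_refl | apply: y_nu].
  - exact: nu_succ.
have D_le n :
    D ⪯ comb3 D (nu n) (mu n) (2 * (h2 + 2 * h4)) (2 * (h1 + h4 + h5) + 1) (2 * h3).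
  have -> : comb3 D (nu n) (mu n) (2 * (h2 + 2 * h4)) (2 * (h1 + h4 + h5) + 1) (2 * h3) =
      comb3 D (nu n) (mu n) (h2 + 2 * h4) (h1 + h4 + h5) h3
      + comb3 D (nu n) (mu n) (h2 + 2 * h4) (h1 + h4 + h5) h3
      + comb3 D (nu n) (mu n) 0 1 0.
    by rewrite !comb3D; congr comb3; ring.
  apply: vle_trans (S_triangle _ (p (x n.+1)) _) _.
  by apply: vleD; [apply: vleD; apply: pu_near | rewrite comb3_010 S_sym; apply: nu_succ].
have a_lt1 : 2 * (h2 + 2 * h4) < 1 by h_lra.
have w_decr : decr_to_0 le (fun n => (1 - 2 * (h2 + 2 * h4))^-1 *:
    ((2 * (h1 + h4 + h5) + 1) *: nu n + (2 * h3) *: mu n)).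
  apply: decr_to_0Z; first by rewrite invr_gt0 subr_gt0.
  apply: decr_to_0D; apply: decr_to_0Z; [h_lra | exact: nu_decr | h_lra | exact: mu_decr].
have [_ [_ w_inf]] := w_decr; apply: S_le0_eq; apply: w_inf => n.
by apply: vle_absorb => //; rewrite addrA; apply: D_le.
Qed.

End JungckSequence.

Lemma coincidence_exists : archimedean le -> inhabited X ->
  (forall y, fimage p y -> fimage k y) ->
  V_complete_set le S (fimage p) \/ V_complete_set le S (fimage k) ->
  exists u, p u = k u.
Proof.
move=> arch [x0] p_sub_k complete.
have [g kg] : exists g : X -> X, forall x, k (g x) = p x.
  by apply: (choice (fun x y => k y = p x)) => x; apply: p_sub_k; exists x.
pose x n := iter n g x0.
have kx n : k (x n.+1) = p (x n) by apply: kg.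
have cauchy := jungck_V_Cauchy kx arch.
suff [z [u <-] conv] : exists2 z, fimage k z & V_converges le S (fun n => p (x n)) z.
  by exists u; apply: jungck_limit_coincidence conv.
case: complete => [complete_p | complete_k].
- have [z [w <-] conv] := complete_p _ (fun n => ex_intro _ (x n) erefl) cauchy.
  by exists (p w) => //; apply: p_sub_k; exists w.
- exact: complete_k _ (fun n => ex_intro _ (x n.+1) (kx n)) cauchy.
Qed.

End Contraction.
End VectorSMetric.
End OrderedLinearSpace.

Theorem corollary3p2 (R : realType) (V : lmodType R) (le : V -> V -> Prop)
  (X : Type) (S : X -> X -> X -> V) (p k : X -> X) (h1 h2 h3 h4 h5 : R) :
  linear_lattice le -> archimedean le ->
  inhabited X -> vector_S_metric le S -> V_complete le S ->
  0 < h1 -> 0 < h2 -> 0 < h3 -> 0 < h4 -> 0 < h5 ->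
  2 * h1 + 2 * h2 + 2 * h3 + 4 * h4 + 4 * h5 < 1 ->
  (forall xi ga : X,
     le (S (p xi) (p xi) (p ga))
        (h1 *: S (k xi) (k xi) (k ga) + h2 *: S (p xi) (p xi) (k xi)
         + h3 *: S (p ga) (p ga) (k ga) + h4 *: S (p xi) (p xi) (k ga)
         + h5 *: S (p ga) (p ga) (k xi))) ->
  (forall y, fimage p y -> fimage k y) ->
  (V_complete_set le S (fimage p) \/ V_complete_set le S (fimage k)) ->
  (exists y, point_of_coincidence p k y /\
     forall y', point_of_coincidence p k y' -> y' = y) /\
  (weakly_compatible p k ->
     exists x, (p x = x /\ k x = x) /\ forall x', p x' = x' /\ k x' = x' -> x' = x).
Proof.
move=> [ols _] arch inhX Sm _ h1_gt0 h2_gt0 h3_gt0 h4_gt0 h5_gt0 h_small contr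
  p_sub_k complete.
have unique := coincidence_value_unique ols Sm h1_gt0 h2_gt0 h3_gt0 h4_gt0 h5_gt0
  h_small contr.
have [u eu] := coincidence_exists ols Sm h1_gt0 h2_gt0 h3_gt0 h4_gt0 h5_gt0
  h_small contr arch inhX p_sub_k complete.
have coincidence_eq y : point_of_coincidence p k y -> y = p u.
  by move=> [v [<- ev]]; apply: unique.
split; first by exists (p u); split=> //; exists u.
move=> wcomp; exists (p u).
have e_pu : p (p u) = k (p u) by rewrite {1}eu; apply: wcomp.
have fix_pu : p (p u) = p u by apply: unique.
split; first by split; last rewrite -e_pu.
by move=> w [pw kw]; apply: coincidence_eq; exists w; rewrite pw kw.
Qed.
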